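(* There is a universal constant $C_1<\infty$ such that the following holds. In the setting of the context, let $v\in\mathbb{R}^{V_n}$ with $|v_i|\ge1$ for all $i\in V_n$, and let $N$ be the number of inner clusters consisting of a single vertex. Then for every edge configuration $e$ with positive $\mu_{FKSW}$-probability and every $x\in\mathbb{R}$, \[\mu_{FKSW}\Big(\sum_{k=1}^{\ell}\eta_kw_k\in(x-a-1,x-a+1)\ \Big|\ e\Big)\le \frac{C_1}{\sqrt{N+1}},\] where $w_k=\sum_{j\in C_k\cap V_n}S(j)v_j$ and $a=\sum_{k=\ell+1}^{\ell+q}\sum_{j\in C_k\cap V_n}\sigma_jv_j$.
   Context: Let $G=(V,\mathcal{E})$ be a graph, $V_n\subset V$ a set of $n$ vertices, $\mathcal{E}_n=\{\{i,j\}\in\mathcal{E}:i\in V_n\text{ or }j\in V_n\}$, assumed finite, $J_{ij}=J_{ji}\in\mathbb{R}\setminus\{0\}$ for $\{i,j\}\in\mathcal{E}$, and $\kappa\in\{-1,1\}^{V\setminus V_n}$ a boundary condition. Spin configurations $\sigma\in\{-1,1\}^{V_n}$ are extended to $V$ by $\sigma_j=\kappa_j$ for $j\notin V_n$. Let $\mathcal{E}_n^+=\{\{i,j\}\in\mathcal{E}_n:J_{ij}>0\}$, $\mathcal{E}_n^-=\{\{i,j\}\in\mathcal{E}_n:J_{ij}<0\}$, $p_{ij}=1-e^{-|J_{ij}|}$. For $\sigma\in\{-1,1\}^{V_n}$ and $e=(e_{ij})\in\{0,1\}^{\mathcal{E}_n}$ define \[\mu_{FKSW}(\sigma,e)=Z^{-1}\prod_{\{i,j\}\in\mathcal{E}_n^+}\big((1-p_{ij})1_{e_{ij}=0}+p_{ij}1_{e_{ij}=1}1_{\sigma_i=\sigma_j}\big)\prod_{\{i,j\}\in\mathcal{E}_n^-}\big((1-p_{ij})1_{e_{ij}=0}+p_{ij}1_{e_{ij}=1}1_{\sigma_i\ne\sigma_j}\big),\]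 $Z$ the normalizing constant. Let $\overline{V_n}=V_n\cup\{i\in V:\exists j\in V_n,\ \{i,j\}\in\mathcal{E}_n\}$. Clusters are the equivalence classes of $\overline{V_n}$ under the relation ''connected by a path of edges $\{i,j\}$ with $e_{ij}=1$'' (every vertex is equivalent to itself). Clusters contained in $V_n$ are inner clusters, enumerated $C_1,\dots,C_\ell$; the others are boundary clusters $C_{\ell+1},\dots,C_{\ell+q}$. Fix a total order on $V$; let $c_k$ be the smallest vertex of $C_k$ and $\eta_k=\sigma_{c_k}$ (the cluster-spin). For $i\in C_k$, set $S(i)=\eta_k\sigma_i$. *)

From HB Require Import structures.
From mathcomp Require Import all_boot all_order all_algebra.
From mathcomp Require Import Rstruct.
From Stdlib Require Import Rdefinitions Rtrigo_def.
Set Implicit Arguments. Unset Strict Implicit. Unset Printing Implicit Defensive.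
Import Order.TTheory GRing.Theory Num.Theory.
Local Open Scope ring_scope.

Definition spin (b : bool) : R := if b then 1 else -1.

Section FKSW.
Variables (d : Order.disp_t) (V : orderType d).
Variable adj : rel V.
Variable J : V -> V -> R.
Variable Vn : seq V.
(* a finite "universe" U containing V_n and every neighbour of V_n
   (exists iff E_n is finite); all definitions below are independent of it *)
Variable U : seq V.
(* boundary condition (only its values outside V_n are used) *)
Variable kappa : V -> bool.

Definition UT := seq_sub U.

(* E_n: edges {i,j} with i or j in V_n, oriented by the total order (i < j) *)
Definition edgeb (x : UT * UT) : bool :=
  [&& adj (val x.1) (val x.2), (val x.1 \in Vn) || (val x.2 \in Vn)
    & (val x.1 < val x.2)%O].

Definition ET := {x : UT * UT | edgeb x}.

Definition VnT := seq_sub Vn.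
Definition spinconf := {ffun VnT -> bool}.
Definition edgeconf := {ffun ET -> bool}.

Definition ext (s : spinconf) (j : V) : bool :=
  match @insub V (fun x => x \in Vn) VnT j with Some k => s k | None => kappa j end.

Definition pij (i j : V) : R := 1 - exp (- `|J i j|).

Definition weight (s : spinconf) (e : edgeconf) : R :=
  \prod_(x : ET)
    (let i := val (sval x).1 in let j := val (sval x).2 in
     if 0 < J i j then
       (1 - pij i j) * (~~ e x)%:R + pij i j * (e x)%:R * (ext s i == ext s j)%:R
     else
       (1 - pij i j) * (~~ e x)%:R + pij i j * (e x)%:R * (ext s i != ext s j)%:R).

Definition Zpart : R := \sum_(s : spinconf) \sum_(e : edgeconf) weight s e.

Definition muFKSW (s : spinconf) (e : edgeconf) : R := weight s e / Zpart.

Definition openb (e : edgeconf) (x y : UT) : bool :=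
  [exists z : ET, ((sval z == (x, y)) || (sval z == (y, x))) && e z].

Definition inVbar (x : UT) : bool :=
  (val x \in Vn) || has (fun i => adj i (val x)) Vn.

Definition cluster (e : edgeconf) (x : UT) : {set UT} :=
  [set y | inVbar y && connect (openb e) x y].

Definition inner (e : edgeconf) (x : UT) : bool :=
  inVbar x && (cluster e x \subset [set y | val y \in Vn]).

Definition isrep (e : edgeconf) (x : UT) : bool :=
  [forall y in cluster e x, (val x <= val y)%O].

(* the representatives c_1..c_l of inner clusters, resp. of boundary clusters *)
Definition innerReps (e : edgeconf) : {set UT} :=
  [set x | inner e x && isrep e x].
Definition bdryReps (e : edgeconf) : {set UT} :=
  [set x | [&& inVbar x, ~~ inner e x & isrep e x]].

Definition Nsingle (e : edgeconf) : nat :=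
  #|[set x in innerReps e | #|cluster e x| == 1%N]|.

Definition eta (s : spinconf) (c : UT) : R := spin (ext s (val c)).
Definition Sfun (s : spinconf) (c j : UT) : R := eta s c * spin (ext s (val j)).

Definition wclust (e : edgeconf) (s : spinconf) (v : V -> R) (c : UT) : R :=
  \sum_(j in cluster e c | val j \in Vn) Sfun s c j * v (val j).

Definition sumEtaW (e : edgeconf) (s : spinconf) (v : V -> R) : R :=
  \sum_(c in innerReps e) eta s c * wclust e s v c.

Definition aBdry (e : edgeconf) (s : spinconf) (v : V -> R) : R :=
  \sum_(c in bdryReps e) \sum_(j in cluster e c | val j \in Vn)
     spin (ext s (val j)) * v (val j).

Definition condProb (P : spinconf -> bool) (e : edgeconf) : R :=
  (\sum_(s : spinconf | P s) muFKSW s e) / (\sum_(s : spinconf) muFKSW s e).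

End FKSW.

From Pilot Require Import Defs.
From Stdlib Require Import Rdefinitions.
From HB Require Import structures.
From mathcomp Require Import all_boot all_order all_algebra.
From mathcomp Require Import zify ring lra.
From mathcomp Require Import Rstruct.
Set Implicit Arguments. Unset Strict Implicit. Unset Printing Implicit Defensive.
Import Order.TTheory GRing.Theory Num.Theory.

(* Given the edges, the FKSW weight factorizes: sigma is uniform on the spin
   configurations compatible with the open edges.  A single-vertex inner cluster
   {i} meets no open edge, so flipping sigma_i preserves compatibility; it leaves
   a and the terms of all other clusters unchanged and changes the sign of its
   own term eta_k w_k = sigma_i v_i.  Averaging over the 2^N flips of the N
   singletons, the event becomes a small-ball event for a sum of N terms
   +-|v_i| >= 1.  By the Littlewood-Offord argument (the admissible sign patterns
   form an antichain, after reflecting the negative v_i) and Sperner's theorem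
   it has at most C(N, N/2) <= 2^N / sqrt(N+1) solutions, so C_1 = 1 works. *)

Lemma leq_bin_succ n k : k.*2 < n -> 'C(n, k) <= 'C(n, k.+1).
Proof.
move=> lt_2k_n; rewrite -(leq_pmul2l (ltn0Sn k)) mul_bin_left leq_mul2r.
by apply/orP; right; lia.
Qed.

Lemma leq_bin_half n k : 'C(n, k) <= 'C(n, n./2).
Proof.
have n_half := odd_double_half n.
have up m k' : k' + m = n./2 -> 'C(n, k') <= 'C(n, n./2).
  elim: m k' => [|m IHm] k' def_k; first by rewrite -def_k addn0.
  apply: leq_trans (IHm k'.+1 _); last by rewrite addSnnS.
  by apply: leq_bin_succ; lia.
case: (leqP k n./2) => [le_k_half|lt_half_k]; first by apply: (up (n./2 - k)); lia.
case: (leqP k n) => [le_k_n|lt_n_k]; last by rewrite bin_small.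
by rewrite -bin_sub //; apply: (up (n./2 - (n - k))); lia.
Qed.

Lemma bin_double_succ m : 'C(m.+1.*2, m.+1) = 'C(m.*2.+1, m).*2.
Proof.
apply/eqP; rewrite -(eqn_pmul2l (ltn0Sn m)) doubleS -mul_bin_diag /=.
by apply/eqP; rewrite -!mul2n; ring.
Qed.

Lemma mul_bin_double m : m.+1 * 'C(m.*2.+1, m) = m.*2.+1 * 'C(m.*2, m).
Proof. by rewrite (mul_bin_down m.*2.+1 m) /= (_ : m.*2.+1 - m = m.+1) //; lia. Qed.

Lemma central_bin_double_bound m : 'C(m.*2, m) ^ 2 * m.*2.+1 <= 16 ^ m.
Proof.
elim: m => [|m IHm] //; rewrite bin_double_succ doubleS.
rewrite -(@leq_pmul2l (m.+1 ^ 2)) ?expn_gt0 //.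
have -> : m.+1 ^ 2 * ('C(m.*2.+1, m).*2 ^ 2 * m.*2.+3)
    = 'C(m.*2, m) ^ 2 * m.*2.+1 * (4 * m.*2.+1 * m.*2.+3).
  have := congr1 (expn^~ 2) (mul_bin_double m); rewrite !expnMn => sq_eq.
  transitivity (4 * (m.+1 ^ 2 * 'C(m.*2.+1, m) ^ 2) * m.*2.+3).
    by rewrite -mul2n expnMn; ring.
  by rewrite sq_eq; ring.
apply: leq_trans (leq_mul IHm (leqnn _)) _.
have -> : m.+1 ^ 2 * 16 ^ m.+1 = 16 ^ m * (16 * m.+1 ^ 2).
  by rewrite (expnS 16) mulnCA [m.+1 ^ 2 * _]mulnC mulnCA.
by rewrite leq_mul2l -!mul2n; apply/orP; right; nia.
Qed.

Lemma central_bin_bound n : 'C(n, n./2) ^ 2 * n.+1 <= 4 ^ n.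
Proof.
have := odd_double_half n; set m := n./2.
case: (odd n) => /= <-; last first.
  by rewrite add0n; have := central_bin_double_bound m; rewrite -mul2n expnM.
rewrite add1n -(@leq_pmul2l 4) //.
apply: leq_trans (_ : 'C(m.+1.*2, m.+1) ^ 2 * m.+1.*2.+1 <= _); last first.
  rewrite -expnS (_ : m.*2.+2 = 2 * m.+1) ?expnM; last by lia.
  exact: central_bin_double_bound.
by rewrite bin_double_succ -(mul2n 'C(m.*2.+1, m)) expnMn mulnA; apply: leq_mul.
Qed.

Definition antichain (T : finType) (F : {set {set T}}) :=
  forall A B, A \in F -> B \in F -> A \subset B -> A = B.

Lemma fact_proper_split (T : finType) n (S A : {set T}) :
  #|S| = n.+1 -> A \proper S ->
  #|A|`! * (n.+1 - #|A|)`! = #|S :\: A| * (#|A|`! * (n - #|A|)`!).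
Proof.
move=> cardS /andP [sAS nsSA].
have lt_A_S : #|A| < #|S| by rewrite proper_card // properE sAS.
rewrite cardsDS // cardS (_ : n.+1 - #|A| = (n - #|A|).+1) ?factS; lia.
Qed.

Lemma lym_inequality (T : finType) n (S : {set T}) (F : {set {set T}}) :
  #|S| = n -> F \subset powerset S -> antichain F ->
  \sum_(A in F) #|A|`! * (n - #|A|)`! <= n`!.
Proof.
have sub_S (F' : {set {set T}}) S' A : F' \subset powerset S' -> A \in F' -> A \subset S'.
  by move=> /subsetP sF' /sF'; rewrite powersetE.
elim: n S F => [|n IHn] S F cardS sFS antiF.
  have S0 := cards0_eq cardS; subst S.
  rewrite (eq_bigr (fun=> 1%N)) => [|A /(sub_S _ _ _ sFS)]; last first.
    by rewrite subset0 => /eqP ->; rewrite cards0.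
  by rewrite sum_nat_const muln1; have := subset_leq_card sFS; rewrite powerset0 cards1.
have [SF|notSF] := boolP (S \in F).
  suff -> : F = [set S] by rewrite big_set1 cardS subnn muln1.
  apply/setP => A; rewrite inE; apply/idP/eqP => [AF|->//].
  exact: antiF _ _ AF SF (sub_S _ _ _ sFS AF).
have properF A : A \in F -> A \proper S.
  move=> AF; rewrite properEneq (sub_S _ _ _ sFS AF) andbT.
  by apply: contraNneq notSF => <-.
rewrite (eq_bigr _ (fun A AF => fact_proper_split cardS (properF A AF))).
under eq_bigr => A _ do rewrite -sum_nat_const.
rewrite (exchange_big_dep (mem S)) /=; last by move=> A x _; rewrite inE => /andP [].
rewrite factS -cardS -sum_nat_const leq_sum // => x xS.
pose Fx := [set A in F | x \notin A].
rewrite (eq_bigl (mem Fx)) => [|A]; last by rewrite !inE xS andbT.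
apply: (IHn (S :\ x)).
- by move: cardS; rewrite (cardsD1 x) xS add1n => -[].
- apply/subsetP => A; rewrite !inE subsetD1 => /andP [AF ->].
  by rewrite (sub_S _ _ _ sFS AF).
- by move=> A B; rewrite !inE => /andP [AF _] /andP [BF _]; exact: antiF.
Qed.

Theorem sperner (T : finType) (S : {set T}) (F : {set {set T}}) :
  F \subset powerset S -> antichain F -> #|F| <= 'C(#|S|, #|S|./2).
Proof.
move=> sFS antiF; set n := #|S|.
rewrite -(leq_pmul2r (fact_gt0 n)).
apply: leq_trans (_ : 'C(n, n./2) * \sum_(A in F) #|A|`! * (n - #|A|)`! <= _).
  rewrite -sum_nat_const big_distrr leq_sum //= => A AF.
  have le_A_n : #|A| <= n.
    by apply: subset_leq_card; move/subsetP: sFS => /(_ A AF); rewrite powersetE.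
  by rewrite -(bin_fact le_A_n) leq_mul2r leq_bin_half orbT.
by rewrite leq_mul2l (lym_inequality (erefl n) sFS antiF) orbT.
Qed.

Local Open Scope ring_scope.

Section LittlewoodOfford.
Variables (K : realDomainType) (T : finType) (X : {set T}).

Definition signed_sum (b : T -> K) (tau : {set T}) : K :=
  \sum_(t in X) (if t \in tau then - b t else b t).

Definition small_ball (b : T -> K) (y : K) : {set {set T}} :=
  [set tau in powerset X | (y - 1 < signed_sum b tau) && (signed_sum b tau < y + 1)].

Lemma signed_sum_norm (b : T -> K) (tau : {set T}) :
  let N := [set t in X | b t < 0] in
  signed_sum b tau = signed_sum (fun t => `|b t|) ((tau :\: N) :|: (N :\: tau)).
Proof.
apply: eq_bigr => t tX; rewrite !inE tX /=.
case: (ltrP (b t) 0) => [b_lt0|b_ge0]; case: (t \in tau) => /=.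
- by rewrite ltr0_norm.
- by rewrite ltr0_norm // opprK.
- by rewrite ger0_norm.
- by rewrite ger0_norm.
Qed.

Lemma signed_sum_gap (c : T -> K) (A B : {set T}) t0 :
  {in X, forall t, 0 <= c t} -> A \subset B -> t0 \in X -> t0 \in B -> t0 \notin A ->
  signed_sum c B + (c t0 + c t0) <= signed_sum c A.
Proof.
move=> c_ge0 sAB t0X t0B t0A; rewrite -lerBrDl -sumrB (bigD1 t0) //= t0B (negbTE t0A).
rewrite opprK lerDl sumr_ge0 // => t /andP [tX _].
case: (boolP (t \in A)) => tA; first by rewrite (subsetP sAB t tA) subrr.
by case: (t \in B); rewrite ?subrr // opprK addr_ge0 ?c_ge0.
Qed.

Lemma small_ball_antichain (c : T -> K) (y : K) : {in X, forall t, 1 <= c t} ->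
  antichain (small_ball c y).
Proof.
move=> c_ge1 A B; rewrite !inE => /andP [_ /andP [_ lt_A]].
move=> /andP [sBX /andP [gt_B _]] sAB; apply/eqP; rewrite eqEsubset sAB /=.
apply/negP => /negP /subsetPn [t0 t0B t0A].
have t0X : t0 \in X := subsetP sBX t0 t0B.
have c_ge0 : {in X, forall t, 0 <= c t} by move=> t /c_ge1; apply: le_trans.
have := signed_sum_gap c_ge0 sAB t0X t0B t0A; have := c_ge1 t0 t0X; lra.
Qed.

Theorem littlewood_offord (b : T -> K) (y : K) : {in X, forall t, 1 <= `|b t|} ->
  (#|small_ball b y| <= 'C(#|X|, #|X|./2))%N.
Proof.
move=> b_ge1; set N := [set t in X | b t < 0].
pose phi tau := (tau :\: N) :|: (N :\: tau).
have phiK : involutive phi.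
  move=> tau; apply/setP => t; rewrite !inE.
  by case: (t \in tau); case: (t \in X); case: (b t < 0).
have phi_ball : phi @: small_ball b y \subset small_ball (fun t => `|b t|) y.
  apply/subsetP => A /imsetP [tau + ->]; rewrite !inE signed_sum_norm.
  move=> /andP [tX ->]; rewrite andbT; apply/subsetP => t.
  by rewrite /phi !inE => /orP [/andP [_ /(subsetP tX)] | /andP [_ /andP [-> _]]].
rewrite -(card_imset _ (inv_inj phiK)).
apply: leq_trans (subset_leq_card phi_ball) (sperner _ (@small_ball_antichain _ y b_ge1)).
by apply/subsetP => A; rewrite inE => /andP [].
Qed.

End LittlewoodOfford.

Lemma central_bin_sqrt_bound (K : rcfType) n :
  ('C(n, n./2)%:R : K) * Num.sqrt (n%:R + 1) <= 2 ^+ n.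
Proof.
rewrite -(ger0_norm (exprn_ge0 _ (ler0n _ 2))) -sqrtr_sqr -[X in X * _]ger0_norm //.
rewrite -sqrtr_sqr -sqrtrM ?sqr_ge0 // ler_sqrt ?sqr_ge0 // -exprM mulnC exprM.
by rewrite natr1 -natrX -natrM -!natrX ler_nat; apply: central_bin_bound.
Qed.

Lemma small_ball_ratio (K : rcfType) n (a b : nat) :
  (2 ^ n * a <= 'C(n, n./2) * b)%N -> (a%:R / b%:R : K) <= 1 / Num.sqrt (n%:R + 1).
Proof.
move=> count_le; have [->|b_gt0] := posnP b.
  by rewrite mulr0n invr0 mulr0 divr_ge0 ?sqrtr_ge0.
have sqrt_gt0 : 0 < Num.sqrt (n%:R + 1 : K) by rewrite sqrtr_gt0 ltr_wpDl.
rewrite ler_pdivrMr ?ltr0n // mul1r mulrC ler_pdivlMr //.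
rewrite -(@ler_pM2l _ (2 ^+ n)) ?exprn_gt0 // mulrA.
apply: le_trans (_ : 'C(n, n./2)%:R * b%:R * Num.sqrt (n%:R + 1) <= _).
  by rewrite ler_pM2r // -natrX -!natrM ler_nat.
by rewrite mulrAC ler_pM2r ?ltr0n // central_bin_sqrt_bound.
Qed.

Lemma spin_sqr b : spin b * spin b = 1.
Proof. by case: b; rewrite /spin ?mulrNN mulr1. Qed.

Lemma spinN b : spin (~~ b) = - spin b.
Proof. by case: b; rewrite /spin ?opprK. Qed.

Lemma normr_spin b : `|spin b| = 1.
Proof. by case: b; rewrite /spin ?normrN normr1. Qed.

Section FKSWConditioning.
Variables (d : Order.disp_t) (V : orderType d) (adj : rel V) (J : V -> V -> R)
  (Vn U : seq V) (kappa : V -> bool) (e : edgeconf adj Vn U).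

Definition edge_compatible (z : ET adj Vn U) (s : spinconf Vn) : bool :=
  let i := val (sval z).1 in let j := val (sval z).2 in
  if 0 < J i j then ext kappa s i == ext kappa s j else ext kappa s i != ext kappa s j.

Definition compatible (s : spinconf Vn) : bool := [forall z, e z ==> edge_compatible z s].

Definition edge_weight : R :=
  \prod_(z : ET adj Vn U) (let i := val (sval z).1 in let j := val (sval z).2 in
                           if e z then pij J i j else 1 - pij J i j).

Lemma weightE s : weight J kappa s e = (compatible s)%:R * edge_weight.
Proof.
rewrite /weight /edge_weight; have [comp_s|] := boolP (compatible s).
  rewrite mul1r; apply: eq_bigr => z _; have := forallP comp_s z.
  rewrite /edge_compatible /=.
  by case: (e z) => /= hz; case: ifP hz => _ hz; rewrite ?hz /=; lra.
rewrite negb_forall => /existsP [z]; rewrite negb_imply => /andP [ez incomp_z].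
rewrite mul0r (bigD1 z) //= ez; move: incomp_z; rewrite /edge_compatible /=.
by case: ifP => _ /negbTE ->; rewrite mulr0 mulr0n mulr0 add0r mul0r.
Qed.

Lemma condProbE (P : pred (spinconf Vn)) :
  0 < \sum_s muFKSW J kappa s e ->
  condProb J kappa P e =
    (\sum_s (compatible s && P s : nat))%:R / (\sum_s (compatible s : nat))%:R.
Proof.
have sum_muE (Q : pred (spinconf Vn)) : \sum_(s | Q s) muFKSW J kappa s e
    = (\sum_s (compatible s && Q s : nat))%:R * (edge_weight / Zpart adj J Vn U kappa).
  rewrite natr_sum big_distrl big_mkcond /=; apply: eq_bigr => s _.
  by rewrite /muFKSW weightE mulrA; case: (Q s); rewrite ?andbT ?andbF ?mul0r.
have sum_all : \sum_s muFKSW J kappa s e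
    = (\sum_s (compatible s : nat))%:R * (edge_weight / Zpart adj J Vn U kappa).
  by rewrite sum_muE; under eq_bigr do rewrite andbT.
(* [condProb] is stated with Stdlib's [Rdiv]. *)
rewrite /condProb RdivE sum_all sum_muE => /lt0r_neq0; rewrite mulf_eq0 negb_or.
by case/andP => _ k_neq0; rewrite invfM mulrACA mulfV // mulr1.
Qed.

Definition singletons : {set UT U} := [set c in innerReps e | #|cluster e c| == 1%N].

Lemma singletonP c : c \in singletons -> val c \in Vn /\ cluster e c = [set c].
Proof.
rewrite !inE => /andP [/andP [/andP [Vbar_c sub_Vn] _] /cards1P [c' cl_c]].
have c_cl : c \in cluster e c by rewrite inE Vbar_c connect0.
move: (c_cl); rewrite {1}cl_c => /set1P c_eq; rewrite -c_eq in cl_c.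
by split=> //; move/subsetP: sub_Vn => /(_ c c_cl); rewrite inE.
Qed.

Lemma singletons_inner : {subset singletons <= innerReps e}.
Proof. by move=> c; rewrite inE => /andP []. Qed.

Lemma openb_sym : symmetric (openb e).
Proof. by move=> a b; apply: eq_existsb => z; rewrite orbC. Qed.

Lemma cluster_singleton c j :
  inVbar adj Vn c -> j \in cluster e c -> j \in singletons -> c = j.
Proof.
move=> Vbar_c j_cl /singletonP [_ cl_j].
have : c \in cluster e j.
  by move: j_cl; rewrite !inE Vbar_c (sym_connect_sym openb_sym) => /andP [_ ->].
by rewrite cl_j => /set1P.
Qed.

Hypothesis adj_sym : forall i j, adj i j = adj j i.

Lemma open_edge_not_singleton z :
  e z -> ((sval z).1 \notin singletons) && ((sval z).2 \notin singletons).
Proof.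
move=> ez; have /and3P [adj_ab Vn_ab lt_ab] := svalP z.
set a := (sval z).1 in adj_ab Vn_ab lt_ab *; set b := (sval z).2 in adj_ab Vn_ab lt_ab *.
have open_ab : openb e a b.
  by apply/existsP; exists z; rewrite ez andbT -surjective_pairing eqxx.
have Vbar_a : inVbar adj Vn a.
  apply/orP; case/orP: Vn_ab => [->|Vn_b]; [by left | right].
  by apply/hasP; exists (val b); rewrite // adj_sym.
have Vbar_b : inVbar adj Vn b.
  apply/orP; case/orP: Vn_ab => [Vn_a|->]; [right | by left].
  by apply/hasP; exists (val a).
apply/andP; split; apply/negP => /singletonP [_ cl_single].
- have : b \in cluster e a by rewrite inE Vbar_b connect1.
  by rewrite cl_single => /set1P b_eq_a; rewrite b_eq_a ltxx in lt_ab.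
- have : a \in cluster e b by rewrite inE Vbar_a connect1 // openb_sym.
  by rewrite cl_single => /set1P a_eq_b; rewrite a_eq_b ltxx in lt_ab.
Qed.

Definition flip_spins (tau : {set UT U}) (s : spinconf Vn) : spinconf Vn :=
  [ffun k => s k (+) [exists u in tau, val u == val k]].

Lemma flip_spinsK tau : involutive (flip_spins tau).
Proof. by move=> s; apply/ffunP => k; rewrite !ffunE addbK. Qed.

Variable v : V -> R.

Definition singleton_term (s : spinconf Vn) (c : UT U) : R :=
  spin (ext kappa s (val c)) * v (val c).

Definition rest_sum (s : spinconf Vn) : R :=
  \sum_(c in innerReps e | c \notin singletons) Defs.eta kappa s c * wclust kappa e s v c
  + aBdry kappa e s v.

Lemma sumEtaW_aBdry_split s : sumEtaW kappa e s v + aBdry kappa e s v =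
  rest_sum s + \sum_(c in singletons) singleton_term s c.
Proof.
rewrite /sumEtaW /rest_sum (bigID (mem singletons)) /= -addrA addrC; congr (_ + _).
rewrite (eq_bigl (mem singletons)) => [|c]; last exact/andb_idl/singletons_inner.
apply: eq_bigr => c /singletonP [Vn_c cl_c].
rewrite /wclust cl_c (big_pred1 c) => [|j]; last by rewrite inE andb_idr // => /eqP ->.
by rewrite /Sfun /Defs.eta !mulrA spin_sqr mul1r.
Qed.

Section FlipSingletons.
Variables (tau : {set UT U}) (s : spinconf Vn).
Hypothesis tau_single : tau \subset singletons.

Lemma ext_flip_spins u :
  ext kappa (flip_spins tau s) (val u) = ext kappa s (val u) (+) (u \in tau).
Proof.
rewrite /ext; case: insubP => [k _ k_u|notVn_u].
  rewrite ffunE; congr (_ (+) _); apply/existsP/idP => [[w /andP [w_tau /eqP w_k]]|u_tau].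
    by have -> : u = w by apply: val_inj; rewrite -k_u -w_k.
  by exists u; rewrite u_tau k_u eqxx.
have [u_tau|] := boolP (u \in tau); last by rewrite addbF.
by have [Vn_u _] := singletonP (subsetP tau_single u u_tau); rewrite Vn_u in notVn_u.
Qed.

Lemma ext_flip_spins_notin u :
  u \notin singletons -> ext kappa (flip_spins tau s) (val u) = ext kappa s (val u).
Proof.
move=> u_single; have u_tau : u \notin tau := contra (subsetP tau_single u) u_single.
by rewrite ext_flip_spins (negbTE u_tau) addbF.
Qed.

Lemma compatible_flip_spins : compatible (flip_spins tau s) = compatible s.
Proof.
apply: eq_forallb => z; case ez: (e z) => //=.
have /andP [a_single b_single] := open_edge_not_singleton ez.
by rewrite /edge_compatible /= !ext_flip_spins_notin.
Qed.

Lemma rest_sum_flip : rest_sum (flip_spins tau s) = rest_sum s.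
Proof.
have cluster_notin c : inVbar adj Vn c -> c \notin singletons ->
    {in cluster e c, forall j, ext kappa (flip_spins tau s) (val j) = ext kappa s (val j)}.
  move=> Vbar_c c_single j j_cl; apply: ext_flip_spins_notin.
  by apply: contra c_single => j_single; rewrite (cluster_singleton Vbar_c j_cl).
rewrite /rest_sum; congr (_ + _).
  apply: eq_bigr => c /andP [c_inner c_single].
  have Vbar_c : inVbar adj Vn c by move: c_inner; rewrite inE => /andP [/andP []].
  rewrite /Defs.eta ext_flip_spins_notin //; congr (_ * _); apply: eq_bigr => j /andP [j_cl _].
  by rewrite /Sfun /Defs.eta ext_flip_spins_notin // (cluster_notin c).
apply: eq_bigr => c; rewrite inE => /and3P [Vbar_c not_inner _].
have c_single : c \notin singletons.
  by apply: contra not_inner => /singletons_inner; rewrite inE => /andP [].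
by apply: eq_bigr => j /andP [j_cl _]; rewrite (cluster_notin c).
Qed.

Lemma singleton_sum_flip :
  \sum_(c in singletons) singleton_term (flip_spins tau s) c
    = signed_sum singletons (singleton_term s) tau.
Proof.
apply: eq_bigr => c _; rewrite /singleton_term ext_flip_spins.
by case: (c \in tau); rewrite /= ?addbT ?addbF ?spinN // -mulNr.
Qed.

End FlipSingletons.

Hypothesis v_ge1 : forall i, i \in Vn -> 1 <= `|v i|.
Variable x : R.

Definition window (s : spinconf Vn) : bool :=
  (x - aBdry kappa e s v - 1 < sumEtaW kappa e s v)
  && (sumEtaW kappa e s v < x - aBdry kappa e s v + 1).

Lemma window_flip (tau : {set UT U}) s : tau \subset singletons ->
  window (flip_spins tau s)
    = (tau \in small_ball singletons (singleton_term s) (x - rest_sum s)).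
Proof.
move=> tau_single; rewrite inE powersetE tau_single /window.
have := sumEtaW_aBdry_split (flip_spins tau s).
rewrite rest_sum_flip // singleton_sum_flip // => split_eq.
by apply/andP/andP => -[lo hi]; split; lra.
Qed.

Lemma window_flips_count s :
  (\sum_(tau in powerset singletons)
      (compatible (flip_spins tau s) && window (flip_spins tau s))
    <= compatible s * 'C(#|singletons|, #|singletons|./2))%N.
Proof.
set B := small_ball singletons (singleton_term s) (x - rest_sum s).
rewrite (eq_bigr (fun tau => (compatible s && (tau \in B) : nat))) => [|tau]; last first.
  by rewrite powersetE => tau_single; rewrite compatible_flip_spins // window_flip.
case: (compatible s); last by rewrite big1.
have -> : (\sum_(tau in powerset singletons) (true && (tau \in B)) = #|B|)%N.
  rewrite -sum1_card [LHS]big_mkcond [RHS]big_mkcond /=; apply: eq_bigr => tau _.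
  by rewrite [tau \in B]inE; case: (tau \in powerset _).
rewrite mul1n littlewood_offord // => c /singletonP [Vn_c _].
by rewrite /singleton_term normrM normr_spin mul1r v_ge1.
Qed.

Lemma window_count :
  (2 ^ #|singletons| * \sum_s (compatible s && window s)
    <= 'C(#|singletons|, #|singletons|./2) * \sum_s compatible s)%N.
Proof.
rewrite -card_powerset -sum_nat_const.
under eq_bigr => tau _ do rewrite (reindex_inj (inv_inj (flip_spinsK tau))).
rewrite exchange_big /= big_distrr /= leq_sum // => s _.
by rewrite mulnC window_flips_count.
Qed.

Lemma condProb_window : 0 < \sum_s muFKSW J kappa s e ->
  condProb J kappa window e <= 1 / Num.sqrt ((Nsingle e)%:R + 1).
Proof. by move=> pos; rewrite condProbE //; apply: small_ball_ratio window_count. Qed.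

End FKSWConditioning.

Theorem mainTheorem5 :
  exists C1 : R, forall (d : Order.disp_t) (V : orderType d) (adj : rel V)
    (J : V -> V -> R) (Vn U : seq V) (kappa : V -> bool) (v : V -> R),
    (forall i j, adj i j = adj j i) ->
    (forall i, ~~ adj i i) ->
    (forall i j, J i j = J j i) ->
    (forall i j, adj i j -> J i j != 0) ->
    uniq Vn ->
    {subset Vn <= U} ->
    (forall i j, i \in Vn -> adj i j -> j \in U) ->
    (forall i, i \in Vn -> 1 <= `|v i|) ->
    forall (e : edgeconf adj Vn U) (x : R),
      0 < \sum_(s : spinconf Vn) muFKSW J kappa s e ->
      condProb J kappa
        (fun s => (x - aBdry kappa e s v - 1 < sumEtaW kappa e s v)
               && (sumEtaW kappa e s v < x - aBdry kappa e s v + 1)) e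
      <= C1 / Num.sqrt ((Nsingle e)%:R + 1).
Proof.
exists 1 => d V adj J Vn U kappa v adj_sym _ _ _ _ _ _ v_ge1 e x.
exact: condProb_window.
Qed.
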